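(* Let $T,M,\delta,\tau$ be as in the setup, let $\rho^*=\mathrm{OPT}$, and let $\zeta\ge 0$. Let $\mathcal{H}$ be the family of all $k$-element subsets $U\subseteq V_T$ with $\mathcal{S}_U\neq\emptyset$. Build the directed flow network $Z$ with vertex set $\{s\}\cup\{x_U:U\in\mathcal{H}\}\cup V_T\cup\{z\}$ and arcs: $(s,x_U)$ with capacity $\tau(U)$ for each $U\in\mathcal{H}$; $(x_U,v)$ with capacity $+\infty$ for each $U\in\mathcal{H}$ and $v\in U$; $(v,z)$ with capacity $\zeta$ for each $v\in V_T$. Let $(\mathsf{S},\mathsf{Z})$ be a minimum $s$–$z$ cut of $Z$ (a partition of its vertices with $s\in\mathsf{S}$, $z\in\mathsf{Z}$ minimizing the total capacity of arcs from $\mathsf{S}$ to $\mathsf{Z}$). If $\mathsf{S}\cap V_T\neq\emptyset$ then $\zeta\le\rho^*$; otherwise $\zeta\ge\rho^*$.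
   Context: Setup. A temporal network is a pair $T=(V_T,E_T)$ where $V_T$ is a finite set of $n$ vertices and $E_T$ is a finite set of temporal edges $(u,v,t)$ with $u,v\in V_T$ and timestamp $t\in\mathbb{R}_{>0}$; timestamps are assumed distinct. A $k$-vertex $\ell$-edge temporal motif ($k,\ell\ge 2$) is a pair $M=(K,\sigma)$ where $K=(V_K,E_K)$ is a directed, weakly connected multigraph with $|V_K|=k$, $|E_K|=\ell$, and $\sigma$ is an ordering of $E_K$; equivalently $M$ is the sequence $\langle(x_1,y_1),\dots,(x_\ell,y_\ell)\rangle$ of its edges in the order $\sigma$. Given $\delta>0$, a $\delta$-instance of $M$ in a temporal network is a sequence $S=\langle(x'_1,y'_1,t'_1),\dots,(x'_\ell,y'_\ell,t'_\ell)\rangle$ of $\ell$ distinct temporal edges of that network with $t'_1<\dots<t'_\ell$ such that (1) there is a bijection $h$ from the set of vertices appearing in $S$ onto $V_K$ with $h(x'_i)=x_i$ and $h(y'_i)=y_i$ for all $i\in[\ell]$, and (2) $t'_\ell-t'_1\le\delta$. We write $v\in S$ if $v$ is an endpoint of some edge of $S$; every $\delta$-instance contains exactly $k$ vertices. For $W\subseteq V_T$, $T[W]=(W,\{(u,v,t)\in E_T:u,v\in W\})$ is the induced temporal subnetwork and $\mathcal{S}_W$ is the set of $\delta$-instances of $M$ in $T[W]$. A weighting function $\tau$ assigns a weight $\tau(S)>0$ to each $\delta$-instance $S$ of $M$ in $T$; for $W\subseteq V_T$, $\tau(W)=\sum_{S\in\mathcal{S}_W}\tau(S)$. The temporal motif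 degree of $v$ in $T[W]$ is $C_W(v)=\sum_{S\in\mathcal{S}_W:\,v\in S}\tau(S)$. The density of a nonempty $W\subseteq V_T$ is $\rho(W)=\tau(W)/|W|$, and $\mathrm{OPT}=\max_{\emptyset\ne W\subseteq V_T}\rho(W)$ is the optimal value of the Temporal Motif Densest Subnetwork (TMDS) problem. *)

From HB Require Import structures.
From mathcomp Require Import all_boot all_order all_algebra.
From mathcomp Require Import reals constructive_ereal.
Set Implicit Arguments. Unset Strict Implicit. Unset Printing Implicit Defensive.
Import Order.TTheory GRing.Theory Num.Theory.
Local Open Scope ring_scope.

(* A temporal network T = (V_T, E_T): vertices are the finite type V; temporal
   edges are the elements of the finite type E, the edge e being the triple
   (tsrc e, tdst e, time e). *)
Definition temporal_network (R : realType) (V E : finType)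
  (tsrc tdst : E -> V) (time : E -> R) : Prop :=
  (forall e, 0 < time e) /\ injective time.

(* A k-vertex l-edge temporal motif: V_K = 'I_k, the edges listed in the order
   sigma as M : 'I_l -> 'I_k * 'I_k (multigraph: repetitions allowed). *)
Definition motif_rel (k l : nat) (M : 'I_l -> 'I_k * 'I_k) : rel 'I_k :=
  fun i j => [exists e : 'I_l, (M e == (i, j)) || (M e == (j, i))].

Definition is_motif (k l : nat) (M : 'I_l -> 'I_k * 'I_k) : Prop :=
  (2 <= k)%N /\ (2 <= l)%N /\ (forall i j : 'I_k, connect (motif_rel M) i j).

Section Instances.
Variables (R : realType) (V E : finType) (tsrc tdst : E -> V) (time : E -> R).
Variables (k l : nat) (M : 'I_l -> 'I_k * 'I_k) (delta : R).

Definition verts (S : {ffun 'I_l -> E}) : {set V} :=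
  [set v | [exists i, (tsrc (S i) == v) || (tdst (S i) == v)]].

Definition is_instance (S : {ffun 'I_l -> E}) : bool :=
  [&& [forall i, forall j, (S i == S j) ==> (i == j)],
      [forall i : 'I_l, forall j : 'I_l, (i < j)%N ==> (time (S i) < time (S j))],
      [exists h : {ffun V -> 'I_k},
         [&& [forall v in verts S, forall w in verts S, (h v == h w) ==> (v == w)],
             [forall j : 'I_k, exists v in verts S, h v == j] &
             [forall i : 'I_l, (h (tsrc (S i)) == (M i).1) && (h (tdst (S i)) == (M i).2)]]] &
      [forall i : 'I_l, forall j : 'I_l, time (S j) - time (S i) <= delta]].

Definition instances_in (W : {set V}) : {set {ffun 'I_l -> E}} :=
  [set S | is_instance S && (verts S \subset W)].

Variable tau : {ffun 'I_l -> E} -> R.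

Definition tauW (W : {set V}) : R := \sum_(S in instances_in W) tau S.

Definition density (W : {set V}) : R := tauW W / #|W|%:R.

Definition is_OPT (rho : R) : Prop :=
  (exists2 W : {set V}, W != set0 & density W = rho) /\
  (forall W : {set V}, W != set0 -> density W <= rho).

Definition Hfam : pred {set V} :=
  fun U => (#|U| == k) && (instances_in U != set0).

Definition Hsub := {U : {set V} | Hfam U}.

Definition node := ((unit + unit) + (Hsub + V))%type.
Definition s_node : node := inl (inl tt).
Definition z_node : node := inl (inr tt).
Definition x_node (U : Hsub) : node := inr (inl U).
Definition v_node (v : V) : node := inr (inr v).

Variable zeta : R.

(* capacities (0 = no arc) *)
Definition cap (a b : node) : \bar R :=
  match a, b with
  | inl (inl _), inr (inl U) => (tauW (val U))%:E
  | inr (inl U), inr (inr v) => if v \in val U then +oo%E else 0%E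
  | inr (inr _), inl (inr _) => zeta%:E
  | _, _ => 0%E
  end.

Definition cut_capacity (C : {set node}) : \bar R :=
  (\sum_(a in C) \sum_(b in ~: C) cap a b)%E.

Definition is_min_cut (C : {set node}) : Prop :=
  [/\ s_node \in C, z_node \notin C &
      forall C' : {set node}, s_node \in C' -> z_node \notin C' ->
        (cut_capacity C <= cut_capacity C')%E].

End Instances.

From Pilot Require Import Defs.
From HB Require Import structures.
From mathcomp Require Import all_boot all_order all_algebra.
From mathcomp Require Import reals constructive_ereal.
From mathcomp Require Import lra.
Set Implicit Arguments. Unset Strict Implicit. Unset Printing Implicit Defensive.
Import Order.TTheory GRing.Theory Num.Theory.
Local Open Scope ring_scope.

(* Every instance has exactly k vertices, so it lies in T[U] for exactly one
   U in H, namely its vertex set; hence tau(W) = sum of tau(U) over U in H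
   with U inside W.  Call the closure of W the cut whose source side is s, W
   and the x_U with U inside W.  Replacing any s-z cut by the closure of its
   vertex set W never increases the capacity (an x_U on the source side with
   a vertex of U on the sink side costs +oo), and the closure of W costs
     g(W) = sum_(U in H) tau(U) - tau(W) + zeta |W|.
   So the vertex set W0 of a minimum cut minimizes g.  Comparing with the
   empty set, g(W0) <= g(0) gives tau(W0) >= zeta |W0|, i.e. OPT >= zeta when
   W0 is nonempty; if W0 is empty, g(0) <= g(W) gives tau(W) <= zeta |W| for
   all W, i.e. OPT <= zeta. *)

Section MinCut.
Variables (R : realType) (V E : finType) (tsrc tdst : E -> V) (time : E -> R).
Variables (k l : nat) (M : 'I_l -> 'I_k * 'I_k) (delta : R).
Variables (tau : {ffun 'I_l -> E} -> R) (zeta : R).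

Local Notation node := (node tsrc tdst time M delta).
Local Notation Hsub := (Hsub tsrc tdst time M delta).
Local Notation s_node := (s_node tsrc tdst time M delta).
Local Notation z_node := (z_node tsrc tdst time M delta).
Local Notation x_node := (@x_node R V E tsrc tdst time k l M delta).
Local Notation v_node := (v_node tsrc tdst time M delta).
Local Notation instance := (is_instance tsrc tdst time M delta).
Local Notation verts := (verts tsrc tdst).
Local Notation tauW := (tauW tsrc tdst time M delta tau).
Local Notation cut_capacity := (cut_capacity tau zeta).
Local Notation cap := (cap tau zeta).

Lemma card_verts_instance S : instance S -> #|verts S| = k.
Proof.
case/and4P=> _ _ /existsP[h /and3P[h_inj h_onto _]] _.
have inj_h : {in verts S &, injective h}.
  move=> v w vS wS hvw.
  by move/forall_inP: h_inj => /(_ v vS)/forall_inP/(_ w wS)/implyP/(_ (introT eqP hvw))/eqP.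
have onto_h : h @: verts S = [set: 'I_k].
  apply/setP=> j; rewrite inE.
  by have /exists_inP[v vS /eqP <-] := forallP h_onto j; apply: imset_f.
by rewrite -(card_in_imset inj_h) onto_h cardsT card_ord.
Qed.

Lemma Hfam_verts S : instance S -> Hfam tsrc tdst time M delta (verts S).
Proof.
move=> inst_S; rewrite /Hfam card_verts_instance // eqxx.
by apply/set0Pn; exists S; rewrite inE inst_S subxx.
Qed.

Lemma card_Hsub (U : Hsub) : #|val U| = k.
Proof. by case: U => U /= /andP[/eqP]. Qed.

Lemma tauW_partition W : tauW W = \sum_(U : Hsub | val U \subset W) tauW (val U).
Proof.
rewrite /Defs.tauW (exchange_big_dep instance) /=; last by move=> U S _; rewrite inE => /andP[].
rewrite [LHS]big_mkcond [RHS]big_mkcond; apply: eq_bigr => S _.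
rewrite inE; case: (boolP (instance S)) => //= inst_S.
case: (boolP (verts S \subset W)) => SW; last first.
  apply/esym/big1 => U /andP[UW]; rewrite inE => /andP[_ SU].
  by rewrite (subset_trans SU UW) in SW.
pose US : Hsub := exist _ (verts S) (Hfam_verts inst_S).
rewrite (big_pred1 US) // => U /=; rewrite inE inst_S /=; apply/idP/idP.
- case/andP=> UW SU; apply/eqP/val_inj/esym/eqP.
  by rewrite eqEcard SU card_Hsub card_verts_instance ?leqnn.
- by move/eqP->; rewrite /= SW subxx.
Qed.

Lemma tauW_set0 : (0 < k)%N -> tauW set0 = 0.
Proof.
move=> k_gt0; apply: big1 => S; rewrite inE subset0 => /andP[inst_S /eqP S0].
by have := card_verts_instance inst_S; rewrite S0 cards0 => k0; rewrite -k0 in k_gt0.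
Qed.

Lemma tauW_ge0 W : (forall S, instance S -> 0 <= tau S) -> 0 <= tauW W.
Proof. by move=> tau_ge0; apply: sumr_ge0 => S; rewrite inE => /andP[/tau_ge0]. Qed.

Lemma sum_node (F : node -> \bar R) : (\sum_n F n =
  F s_node + F z_node + \sum_(U : Hsub) F (x_node U) + \sum_v F (v_node v))%E.
Proof.
have sum_unit (G : unit -> \bar R) : (\sum_i G i = G tt)%E by rewrite (big_pred1 tt) // => -[].
by rewrite !big_sumType !sum_unit -addeA.
Qed.

Definition x_crossing (C : {set node}) (U : Hsub) : \bar R :=
  if x_node U \in C then \sum_v (if (v_node v \notin C) && (v \in val U) then +oo%E else 0%E)
  else (tauW (val U))%:E.

Lemma cut_capacityE (C : {set node}) : s_node \in C -> z_node \notin C ->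
  cut_capacity C =
  (\sum_(U : Hsub) x_crossing C U + \sum_(v | v_node v \in C) zeta%:E)%E.
Proof.
move=> sC zC.
have out_s : (\sum_(b in ~: C) cap s_node b =
    \sum_(U : Hsub) if x_node U \in C then 0 else (tauW (val U))%:E)%E.
  rewrite big_mkcond sum_node /= !inE sC (negbTE zC) /= !add0e.
  rewrite [X in (_ + X)%E]big1 ?adde0 => [|v _]; last by case: ifP.
  by apply: eq_bigr => U _; rewrite inE if_neg.
have out_x U : (\sum_(b in ~: C) cap (x_node U) b =
    \sum_v if (v_node v \notin C) && (v \in val U) then +oo else 0)%E.
  rewrite big_mkcond sum_node /= !inE sC (negbTE zC) /= !add0e.
  rewrite big1 ?add0e => [|U' _]; last by case: ifP.
  by apply: eq_bigr => v _; rewrite inE; case: ifP.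
have out_v v : (\sum_(b in ~: C) cap (v_node v) b = zeta%:E)%E.
  rewrite big_mkcond sum_node /= !inE sC (negbTE zC) /=.
  by rewrite !big1 ?adde0 ?add0e // => ? _; case: ifP.
have split_x U : x_crossing C U = ((if x_node U \in C then 0 else (tauW (val U))%:E) +
    if x_node U \in C then \sum_(b in ~: C) cap (x_node U) b else 0)%E.
  by rewrite /x_crossing out_x; case: ifP; rewrite ?adde0 ?add0e.
rewrite /Defs.cut_capacity big_mkcond sum_node sC (negbTE zC) out_s adde0 -addeA.
rewrite (eq_bigr _ (fun U _ => split_x U)) big_split -addeA.
congr (_ + (_ + _))%E; rewrite [RHS]big_mkcond.
by apply: eq_bigr => v _; case: ifP => // _; apply: out_v.
Qed.

Definition closure_cut (W : {set V}) : {set node} :=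
  [set n : node | match n with
                  | inl (inl _) => true
                  | inl (inr _) => false
                  | inr (inl U) => val U \subset W
                  | inr (inr v) => v \in W end].

Lemma closure_cut_s W : s_node \in closure_cut W. Proof. by rewrite inE. Qed.
Lemma closure_cut_z W : z_node \notin closure_cut W. Proof. by rewrite inE. Qed.

Lemma x_crossing_closure W U :
  x_crossing (closure_cut W) U = if val U \subset W then 0%E else (tauW (val U))%:E.
Proof.
rewrite /x_crossing inE; case: ifP => // /subsetP UW.
by apply: big1 => v _; rewrite inE /=; case: (boolP (v \in val U)) => [/UW ->|_]; rewrite ?andbF.
Qed.

Definition closure_capacity (W : {set V}) : R :=
  \sum_(U : Hsub) tauW (val U) - tauW W + zeta * #|W|%:R.

Lemma cut_capacity_closure W : cut_capacity (closure_cut W) = (closure_capacity W)%:E.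
Proof.
rewrite cut_capacityE ?closure_cut_s ?closure_cut_z //.
rewrite /closure_capacity [in RHS](bigID (fun U : Hsub => val U \subset W)) /= -tauW_partition.
rewrite (addrC (tauW W)) addrK EFinD; congr (_ + _)%E.
  by rewrite -sumEFin [RHS]big_mkcond; apply: eq_bigr => U _; rewrite x_crossing_closure if_neg.
rewrite (eq_bigl (mem W)) => [|v]; last by rewrite inE.
by rewrite sumEFin sumr_const mulr_natr.
Qed.

Section CutComparison.
Hypothesis tau_ge0 : forall S, instance S -> 0 <= tau S.
Variable C : {set node}.
Hypotheses (sC : s_node \in C) (zC : z_node \notin C).

Let W := [set v | v_node v \in C].

Lemma x_crossing_closure_le U : (x_crossing (closure_cut W) U <= x_crossing C U)%E.
Proof.
have ge0 : (0 <= x_crossing C U)%E.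
  rewrite /x_crossing; case: ifP => _; last by rewrite lee_fin tauW_ge0.
  by apply: sume_ge0 => v _; case: ifP; rewrite ?leey.
rewrite x_crossing_closure; case: ifP => [_ | /subsetPn[v vU]]; first exact: ge0.
rewrite inE => vC.
rewrite /x_crossing; case: ifP => _ //; apply: le_trans (leey _) _.
rewrite (bigD1 v) //= vC vU /=; apply: leeDl.
by apply: sume_ge0 => w _; case: ifP; rewrite ?leey.
Qed.

Lemma cut_capacity_closure_le : (cut_capacity (closure_cut W) <= cut_capacity C)%E.
Proof.
rewrite !cut_capacityE ?closure_cut_s ?closure_cut_z //.
apply: leeD; first by apply: lee_sum => U _; exact: x_crossing_closure_le.
by rewrite (eq_bigl (fun v => v_node v \in C)) => [|v]; rewrite ?lexx // inE /= inE.
Qed.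

End CutComparison.

Lemma min_cut_closure_capacity_le (C : {set node}) W :
  (forall S, instance S -> 0 <= tau S) -> is_min_cut tau zeta C ->
  closure_capacity [set v | v_node v \in C] <= closure_capacity W.
Proof.
move=> tau_ge0 [sC zC minC]; rewrite -lee_fin -!cut_capacity_closure.
apply: le_trans (cut_capacity_closure_le tau_ge0 sC zC) _.
exact: minC (closure_cut_s W) (closure_cut_z W).
Qed.

End MinCut.

Theorem lemmaF1 (R : realType) (V E : finType) (tsrc tdst : E -> V) (time : E -> R)
  (k l : nat) (M : 'I_l -> 'I_k * 'I_k) (delta : R)
  (tau : {ffun 'I_l -> E} -> R) (zeta rho_star : R) (C : {set node tsrc tdst time M delta}) :
  temporal_network tsrc tdst time ->
  is_motif M ->
  0 < delta ->
  (forall S, is_instance tsrc tdst time M delta S -> 0 < tau S) ->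
  is_OPT tsrc tdst time M delta tau rho_star ->
  0 <= zeta ->
  is_min_cut tau zeta C ->
  ((exists v : V, v_node tsrc tdst time M delta v \in C) -> zeta <= rho_star) /\
  ((forall v : V, v_node tsrc tdst time M delta v \notin C) -> rho_star <= zeta).
Proof.
move=> _ [k_ge2 _] _ tau_gt0 [[Wopt Wopt_n0 <-] opt] _ minC.
have tau_ge0 S inst_S := ltW (tau_gt0 S inst_S).
have g_min W := min_cut_closure_capacity_le W tau_ge0 minC.
have tau0 := tauW_set0 tsrc tdst time M delta tau (ltnW k_ge2).
set W0 := [set v | v_node tsrc tdst time M delta v \in C] in g_min.
split=> [[v vC] | noneC].
- have W0_n0 : W0 != set0 by apply/set0Pn; exists v; rewrite inE.
  apply: le_trans (opt _ W0_n0); rewrite /density ler_pdivlMr ?ltr0n ?card_gt0 //.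
  by have := g_min set0; rewrite /closure_capacity tau0 cards0 mulr0; lra.
- have W0_0 : W0 = set0 by apply/setP => v; rewrite !inE (negbTE (noneC v)).
  rewrite /density ler_pdivrMr ?ltr0n ?card_gt0 //.
  by have := g_min Wopt; rewrite /closure_capacity W0_0 tau0 cards0 mulr0; lra.
Qed.
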